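(* Let $X$, $Y$ be disjoint sets of cardinality at least two, $T$ the $(|X|,|Y|)$-biregular tree, and $c, c'$ legal colourings of $X$ and $Y$. If $v,v'\in VT$ are at even distance, then there exists $\sigma\in\mathrm{Sym}(X\cup Y)$ with $\sigma(X)=X$ satisfying $\sigma(c'(\overline{A}(v'))) = c(\overline{A}(v))$, and for every such $\sigma$ there exists a unique automorphism $g\in\mathrm{Aut}(T)$ with $gV_X=V_X$ such that $gv=v'$ and $c = \sigma\circ c'\circ g$ (as maps $AT\to X\cup Y$).
   Context: $T$ has natural bipartition $VT=V_X\sqcup V_Y$ (vertices in $V_X$ have valency $|X|$, in $V_Y$ valency $|Y|$). $A(v)$, $\overline{A}(v)$ are the sets of arcs (ordered pairs of adjacent vertices) with origin, resp. terminus, $v$; automorphisms act on arcs in the natural way. A legal colouring is a map $c:AT\to X\cup Y$ restricting to a bijection $A(v)\to X$ for $v\in V_X$, to a bijection $A(v)\to Y$ for $v\in V_Y$, and constant on each $\overline{A}(v)$; $c(\overline{A}(v))$ denotes this constant value. *)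

From Stdlib Require Import List Arith.
Import ListNotations.
Set Implicit Arguments.

Section Graph.
Variable V : Type.
Variable adj : V -> V -> Prop.

Fixpoint chain (l : list V) : Prop :=
  match l with
  | x :: ((y :: _) as t) => adj x y /\ chain t
  | _ => True
  end.

Inductive walk : V -> V -> nat -> Prop :=
  | walk_nil : forall v, walk v v 0
  | walk_cons : forall u w v n, adj u w -> walk w v n -> walk u v (S n).

Definition is_dist (u v : V) (n : nat) : Prop :=
  walk u v n /\ forall m, walk u v m -> n <= m.

Definition even_distance (u v : V) : Prop :=
  exists n, is_dist u v n /\ Nat.Even n.

Definition has_cycle : Prop :=
  exists (x : V) (l : list V),
    NoDup (x :: l) /\ 2 <= length l /\ chain (x :: l ++ [x]).

Definition is_tree : Prop :=
  (forall u v, adj u v -> adj v u) /\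
  (forall v, ~ adj v v) /\
  (forall u v, exists n, walk u v n) /\
  ~ has_cycle.

Definition is_aut (g : V -> V) : Prop :=
  (forall u v, g u = g v -> u = v) /\
  (forall v', exists v, g v = v') /\
  (forall u v, adj u v <-> adj (g u) (g v)).
End Graph.

(* The (|X|,|Y|)-biregular tree with its natural bipartition V_X (= inVX) and
   V_Y (= complement): a tree, adjacent vertices in different parts, and the
   neighbourhood of v in V_X (resp. V_Y) is in bijection with X (resp. Y). *)
Definition nbhd_bij (V A : Type) (adj : V -> V -> Prop) (v : V) : Prop :=
  exists f : {w : V | adj v w} -> A,
    (forall a b, f a = f b -> a = b) /\ (forall x, exists a, f a = x).

Definition biregular_tree (X Y V : Type) (adj : V -> V -> Prop)
    (inVX : V -> Prop) : Prop :=
  is_tree adj /\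
  (forall u v, adj u v -> (inVX u <-> ~ inVX v)) /\
  (forall v, inVX v -> nbhd_bij X adj v) /\
  (forall v, ~ inVX v -> nbhd_bij Y adj v).

(* Arcs are ordered pairs (u,w) with adj u w; a colouring is given as a map
   c : V -> V -> X + Y whose values on arcs (u,w) are the relevant ones.
   X \cup Y is the disjoint union X + Y. *)
Definition legal_colouring (X Y V : Type) (adj : V -> V -> Prop)
    (inVX : V -> Prop) (c : V -> V -> X + Y) : Prop :=
  (forall v, inVX v ->
     (forall w, adj v w -> exists x, c v w = inl x) /\
     (forall w1 w2, adj v w1 -> adj v w2 -> c v w1 = c v w2 -> w1 = w2) /\
     (forall x, exists w, adj v w /\ c v w = inl x)) /\
  (forall v, ~ inVX v ->
     (forall w, adj v w -> exists y, c v w = inr y) /\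
     (forall w1 w2, adj v w1 -> adj v w2 -> c v w1 = c v w2 -> w1 = w2) /\
     (forall y, exists w, adj v w /\ c v w = inr y)) /\
  (forall v u1 u2, adj u1 v -> adj u2 v -> c u1 v = c u2 v).

Definition sym_fix_X (X Y : Type) (s : X + Y -> X + Y) : Prop :=
  (forall a b, s a = s b -> a = b) /\
  (forall b, exists a, s a = b) /\
  (forall x, exists x', s (inl x) = inl x') /\
  (forall x', exists x, s (inl x) = inl x').

Definition preserves_part (V : Type) (inVX : V -> Prop) (g : V -> V) : Prop :=
  (forall v, inVX v -> inVX (g v)) /\
  (forall v', inVX v' -> exists v, inVX v /\ g v = v').

Definition good_aut (X Y V : Type) (adj : V -> V -> Prop) (inVX : V -> Prop)
    (c c' : V -> V -> X + Y) (s : X + Y -> X + Y) (v v' : V) (g : V -> V) : Prop :=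
  is_aut adj g /\ preserves_part inVX g /\ g v = v' /\
  (forall a b, adj a b -> c a b = s (c' (g a) (g b))).

(* Even distance puts v and v' in the same part, so swapping the two incoming
   colours gives a suitable sigma.  Given sigma, root the tree at v and grow g
   outwards: g v = v', and once g p is known for the parent p of a vertex x,
   the colour sigma^-1 (c p x) names a unique neighbour of g p under c', which
   is where x must go.  Parents are unique because the tree has no cycles, so
   this defines g on every vertex; it preserves adjacency and colours, and the
   same construction for (c', c, sigma^-1) yields its inverse.  Uniqueness
   holds because a colour-preserving map is determined, one edge at a time, by
   its value at a single vertex of a connected graph. *)

From Stdlib Require Import List Arith Lia Classical ClassicalEpsilon.
Import ListNotations.
Set Implicit Arguments.

Section SymFixX.
Variables X Y : Type.

Definition is_inl (z : X + Y) : Prop :=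
  match z with inl _ => True | inr _ => False end.

Lemma sym_fix_X_intro (s : X + Y -> X + Y) :
  (forall a b, s a = s b -> a = b) -> (forall b, exists a, s a = b) ->
  (forall z, is_inl (s z) <-> is_inl z) -> sym_fix_X s.
Proof.
  intros Hinj Hsurj Hside; split; [exact Hinj | split; [exact Hsurj | split]].
  - intros x; specialize (Hside (inl x)).
    destruct (s (inl x)) as [x'|y] eqn:E; [now exists x' | simpl in Hside; tauto].
  - intros x'; destruct (Hsurj (inl x')) as [[x|y] Hz]; [now exists x |].
    specialize (Hside (inr y)); rewrite Hz in Hside; simpl in Hside; tauto.
Qed.

Lemma sym_fix_X_is_inl (s : X + Y -> X + Y) z :
  sym_fix_X s -> (is_inl (s z) <-> is_inl z).
Proof.
  intros [Hinj [_ [Hl Hl']]]; destruct z as [x|y]; simpl.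
  - destruct (Hl x) as [x' ->]; simpl; tauto.
  - destruct (s (inr y)) as [x'|y'] eqn:E; simpl; [|tauto].
    destruct (Hl' x') as [x Hx]; rewrite <- E in Hx.
    apply Hinj in Hx; discriminate.
Qed.

Lemma sym_fix_X_inverse (s : X + Y -> X + Y) : sym_fix_X s ->
  exists t, sym_fix_X t /\ (forall z, t (s z) = z) /\ (forall z, s (t z) = z).
Proof.
  intros Hs; pose proof Hs as [Hinj [Hsurj _]].
  set (t b := proj1_sig (constructive_indefinite_description _ (Hsurj b))).
  assert (st : forall z, s (t z) = z).
  { intros z; unfold t; now destruct constructive_indefinite_description. }
  assert (ts : forall z, t (s z) = z) by (intros z; apply Hinj, st).
  exists t; split; [|now split].
  apply sym_fix_X_intro.
  - intros a b E; now rewrite <- (st a), <- (st b), E.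
  - intros b; exists (s b); apply ts.
  - intros z; rewrite <- (sym_fix_X_is_inl (t z) Hs), st; tauto.
Qed.

Definition swap (a b z : X + Y) : X + Y :=
  if excluded_middle_informative (z = a) then b
  else if excluded_middle_informative (z = b) then a else z.

Lemma swap_l a b : swap a b a = b.
Proof. unfold swap; now destruct excluded_middle_informative. Qed.

Lemma swapK a b z : swap a b (swap a b z) = z.
Proof. unfold swap; repeat (destruct excluded_middle_informative; subst; try congruence). Qed.

Lemma sym_fix_X_swap a b : (is_inl a <-> is_inl b) -> sym_fix_X (swap a b).
Proof.
  intros Hab; apply sym_fix_X_intro.
  - intros z z' E; now rewrite <- (swapK a b z), <- (swapK a b z'), E.
  - intros z; exists (swap a b z); apply swapK.
  - intros z; unfold swap; repeat (destruct excluded_middle_informative; subst); tauto.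
Qed.

End SymFixX.

Section LegalColouring.
Variables (X Y V : Type) (adj : V -> V -> Prop) (inVX : V -> Prop).
Variable c : V -> V -> X + Y.
Hypothesis Hc : legal_colouring adj inVX c.

Lemma legal_colour_inj [a w1 w2] : adj a w1 -> adj a w2 -> c a w1 = c a w2 -> w1 = w2.
Proof.
  destruct Hc as [HX [HY _]]; destruct (classic (inVX a)) as [Ha|Ha].
  - apply (HX a Ha).
  - apply (HY a Ha).
Qed.

Lemma legal_colour_side {a b} : adj a b -> (inVX a <-> is_inl (c a b)).
Proof.
  destruct Hc as [HX [HY _]]; intros Hab; destruct (classic (inVX a)) as [Ha|Ha].
  - destruct (proj1 (HX a Ha) b Hab) as [x ->]; simpl; tauto.
  - destruct (proj1 (HY a Ha) b Hab) as [y ->]; simpl; tauto.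
Qed.

Lemma legal_colour_surj {a z} : (inVX a <-> is_inl z) -> exists w, adj a w /\ c a w = z.
Proof.
  destruct Hc as [HX [HY _]]; intros Hz; destruct (classic (inVX a)) as [Ha|Ha].
  - destruct z as [x|y]; [apply (HX a Ha) | simpl in Hz; tauto].
  - destruct z as [x|y]; [simpl in Hz; tauto | apply (HY a Ha)].
Qed.

Lemma legal_colour_incoming {u1 u2 w} : adj u1 w -> adj u2 w -> c u1 w = c u2 w.
Proof. apply Hc. Qed.

End LegalColouring.

Section Tree.
Variable V : Type.
Variable adj : V -> V -> Prop.

Inductive path : V -> list V -> V -> Prop :=
  | path_nil a : path a [] a
  | path_cons a b l c : adj a b -> path b l c -> path a (b :: l) c.

Lemma path_app a l b m c : path a l b -> path b m c -> path a (l ++ m) c.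
Proof. induction 1; simpl; [easy | intros; econstructor; eauto]. Qed.

Lemma path_snoc a l b c : path a l b -> adj b c -> path a (l ++ [c]) c.
Proof. intros Hl Hbc; apply (path_app Hl); repeat econstructor; exact Hbc. Qed.

Lemma path_suffix l1 : forall a b l2 c, path a (l1 ++ b :: l2) c -> path b l2 c.
Proof.
  induction l1 as [|x l1 IH]; simpl; intros a b l2 c H; inversion H; subst; eauto.
Qed.

Lemma path_simplify a l b :
  path a l b -> exists p, path a p b /\ NoDup (a :: p) /\ incl p l.
Proof.
  induction 1 as [a | a b l c Hab Hl IH].
  - exists []; repeat constructor; [intros [] | apply incl_refl].
  - destruct IH as [p [Hp [Hnd Hincl]]].
    destruct (classic (In a (b :: p))) as [Hin | Hnin].
    + apply in_split in Hin as [p1 [p2 E]].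
      assert (Hfull : path a (p1 ++ a :: p2) c) by (rewrite <- E; now constructor).
      exists p2; split; [exact (path_suffix _ _ _ Hfull) | split].
      * rewrite E in Hnd; exact (NoDup_app_remove_l _ _ Hnd).
      * intros y Hy.
        assert (Hy' : In y (b :: p)) by (rewrite E; apply in_or_app; now right; right).
        destruct Hy' as [<- | Hy']; [now left | right; auto].
    + exists (b :: p); split; [now constructor | split].
      * now constructor.
      * apply incl_cons; [now left | now apply incl_tl].
Qed.

Lemma path_chain a l b x : path a l b -> adj b x -> chain adj (a :: l ++ [x]).
Proof. induction 1; intros Hx; [now split | split; auto]. Qed.

Hypothesis adj_sym : forall u w, adj u w -> adj w u.
Hypothesis no_cycle : ~ has_cycle adj.

(* Otherwise x and a simple path extracted from the walk would form a cycle. *)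
Lemma path_between_neighbours x p q l :
  adj x p -> adj q x -> p <> q -> path p l q -> In x (p :: l).
Proof.
  intros Hxp Hqx Hpq Hl; apply NNPP; intros Hx.
  destruct (path_simplify Hl) as [P [HP [Hnd Hincl]]].
  apply no_cycle; exists x, (p :: P); split; [|split].
  - constructor; [intros [E | HxP]; apply Hx; [now left | right; auto] | exact Hnd].
  - destruct P; [inversion HP; congruence | simpl; lia].
  - exact (conj Hxp (path_chain HP Hqx)).
Qed.

Hypothesis connected : forall u w, exists n, walk adj u w n.
Variable inVX : V -> Prop.
Hypothesis bipartite : forall u w, adj u w -> (inVX u <-> ~ inVX w).

Lemma walk_snoc u w n z : walk adj u w n -> adj w z -> walk adj u z (S n).
Proof.
  induction 1 as [w | u x w n Hux _ IH]; intros Hwz.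
  - econstructor; [exact Hwz | constructor].
  - econstructor; [exact Hux | exact (IH Hwz)].
Qed.

Lemma walk_last u w n : walk adj u w (S n) -> exists p, walk adj u p n /\ adj p w.
Proof.
  revert u; induction n as [|n IH]; intros u H; inversion H as [|? x ? ? Hux Hx]; subst.
  - inversion Hx; subst; exists u; split; [constructor | exact Hux].
  - destruct (IH x Hx) as [p [Hp Hpw]]; exists p; split; [econstructor; eauto | exact Hpw].
Qed.

Lemma walk_parity u w n : walk adj u w n -> ((inVX u <-> inVX w) <-> Nat.Even n).
Proof.
  induction 1 as [x | u x w n Hux _ IH].
  - split; [intros _; now exists 0 | tauto].
  - assert (Hodd : Nat.Odd n <-> ~ Nat.Even n).
    { split; [intros Ho He; exact (Nat.Even_Odd_False _ He Ho) |].
      intros Hne; destruct (Nat.Even_or_Odd n); tauto. }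
    rewrite Nat.Even_succ, Hodd; pose proof (bipartite Hux).
    destruct (classic (inVX x)), (classic (inVX w)); tauto.
Qed.

Lemma even_distance_same_part u w : even_distance adj u w -> (inVX u <-> inVX w).
Proof. intros [n [[Hw _] Hn]]; exact (proj2 (walk_parity Hw) Hn). Qed.

Lemma dist_exists u w : exists n, is_dist adj u w n.
Proof.
  destruct (connected u w) as [n Hn].
  destruct (dec_inh_nat_subset_has_unique_least_element (walk adj u w)
              (fun m => classic _) (ex_intro _ n Hn)) as [m [Hm _]].
  now exists m.
Qed.

Lemma eq_colour_maps (Z : Type) (c : V -> V -> Z) (u0 : V) (f1 f2 : V -> V) :
  (forall a w1 w2, adj a w1 -> adj a w2 -> c a w1 = c a w2 -> w1 = w2) ->
  f1 u0 = f2 u0 ->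
  (forall a b, adj a b -> adj (f1 a) (f1 b)) ->
  (forall a b, adj a b -> adj (f2 a) (f2 b)) ->
  (forall a b, adj a b -> c (f1 a) (f1 b) = c (f2 a) (f2 b)) ->
  forall x, f1 x = f2 x.
Proof.
  intros Hinj E A1 A2 C x; destruct (connected u0 x) as [n W]; revert E.
  induction W as [y | u w y n Huw _ IH]; intros E; [exact E |].
  apply IH, (Hinj (f1 u)); [now apply A1 | rewrite E; now apply A2 |].
  rewrite C by exact Huw; now rewrite E.
Qed.

Lemma aut_of_inverse (g h : V -> V) :
  (forall a b, adj a b -> adj (g a) (g b)) ->
  (forall a b, adj a b -> adj (h a) (h b)) ->
  (forall x, h (g x) = x) -> (forall y, g (h y) = y) -> is_aut adj g.
Proof.
  intros Ag Ah hg gh; split; [|split].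
  - intros a b E; now rewrite <- (hg a), <- (hg b), E.
  - intros y; now exists (h y).
  - intros a b; split; [apply Ag | intros H; rewrite <- (hg a), <- (hg b); now apply Ah].
Qed.

Section Levels.
Variable root : V.

Definition level (x : V) : nat :=
  proj1_sig (constructive_indefinite_description _ (dist_exists root x)).

Lemma level_spec x : is_dist adj root x (level x).
Proof. unfold level; now destruct constructive_indefinite_description. Qed.

Lemma level_root : level root = 0.
Proof. destruct (level_spec root) as [_ Hmin]; specialize (Hmin 0 (walk_nil _ _)); lia. Qed.

Lemma level_eq0 {x} : level x = 0 -> x = root.
Proof. intros H; destruct (level_spec x) as [W _]; rewrite H in W; now inversion W. Qed.

Lemma level_adj_le a b : adj a b -> level b <= S (level a).
Proof.
  intros Hab; destruct (level_spec a) as [W _]; destruct (level_spec b) as [_ Hmin].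
  exact (Hmin _ (walk_snoc W Hab)).
Qed.

Lemma level_parent {x k} : level x = S k -> exists p, adj p x /\ level p = k.
Proof.
  intros Hx; destruct (level_spec x) as [W _]; rewrite Hx in W.
  destruct (walk_last W) as [p [Wp Hpx]]; exists p; split; [exact Hpx |].
  pose proof (proj2 (level_spec p) _ Wp); pose proof (level_adj_le Hpx); lia.
Qed.

Lemma level_adj a b : adj a b -> level b = S (level a) \/ level a = S (level b).
Proof.
  intros Hab; pose proof (level_adj_le Hab); pose proof (level_adj_le (adj_sym Hab)).
  assert (level a <> level b); [|lia].
  intros E; pose proof (walk_parity (proj1 (level_spec a))) as Pa.
  pose proof (walk_parity (proj1 (level_spec b))) as Pb; rewrite E in Pa.
  pose proof (bipartite Hab).
  destruct (classic (inVX a)), (classic (inVX b)), (classic (inVX root)); tauto.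
Qed.

Lemma path_to_root p : exists l, path p l root /\ forall y, In y l -> level y < level p.
Proof.
  remember (level p) as n eqn:Hn; revert p Hn; induction n as [|n IH]; intros p Hn.
  - rewrite (level_eq0 (eq_sym Hn)); exists []; split; [constructor | intros y []].
  - destruct (level_parent (eq_sym Hn)) as [r [Hrp Hr]].
    destruct (IH r (eq_sym Hr)) as [l [Hl Hlev]].
    exists (r :: l); split; [exact (path_cons (adj_sym Hrp) Hl) |].
    intros y [<- | Hy]; [lia | specialize (Hlev y Hy); lia].
Qed.

Lemma path_from_root p : exists l, path root l p /\ forall y, In y l -> level y <= level p.
Proof.
  remember (level p) as n eqn:Hn; revert p Hn; induction n as [|n IH]; intros p Hn.
  - rewrite (level_eq0 (eq_sym Hn)); exists []; split; [constructor | intros y []].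
  - destruct (level_parent (eq_sym Hn)) as [r [Hrp Hr]].
    destruct (IH r (eq_sym Hr)) as [l [Hl Hlev]].
    exists (l ++ [p]); split; [exact (path_snoc Hl Hrp) |].
    intros y Hy; apply in_app_or in Hy as [Hy | [<- | []]]; [specialize (Hlev y Hy) |]; lia.
Qed.

Lemma parent_unique p q x : adj p x -> adj q x ->
  level x = S (level p) -> level x = S (level q) -> p = q.
Proof.
  intros Hpx Hqx Hp Hq; apply NNPP; intros Hpq.
  destruct (path_to_root p) as [l1 [H1 Hlev1]].
  destruct (path_from_root q) as [l2 [H2 Hlev2]].
  destruct (path_between_neighbours (adj_sym Hpx) Hqx Hpq (path_app H1 H2)) as [-> | Hx];
    [lia |].
  apply in_app_or in Hx as [Hx | Hx]; [specialize (Hlev1 _ Hx) | specialize (Hlev2 _ Hx)]; lia.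
Qed.

Section Extension.
Variables X Y : Type.
Variables c c' : V -> V -> X + Y.
Hypothesis Hc : legal_colouring adj inVX c.
Hypothesis Hc' : legal_colouring adj inVX c'.
Variable s : X + Y -> X + Y.
Hypothesis Hs : sym_fix_X s.
Variable root' : V.
Hypothesis root_part : inVX root <-> inVX root'.
Hypothesis root_colour : forall u u', adj u root -> adj u' root' -> s (c' u' root') = c u root.

(* The graph of the map being built, grown along the levels from [root]. *)
Inductive corr : V -> V -> Prop :=
  | corr_root : corr root root'
  | corr_child p p' x x' : corr p p' -> adj p x -> level x = S (level p) ->
      adj p' x' -> c p x = s (c' p' x') -> corr x x'.

Lemma corr_invariant x x' : corr x x' -> (inVX x <-> inVX x') /\
  forall u u', adj u x -> adj u' x' -> s (c' u' x') = c u x.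
Proof.
  induction 1 as [| p p' x x' _ [IHpart _] Hpx _ Hpx' Hcol]; [easy | split].
  - pose proof (bipartite Hpx); pose proof (bipartite Hpx').
    destruct (classic (inVX x)), (classic (inVX x')); tauto.
  - intros u u' Hu Hu'.
    rewrite (legal_colour_incoming Hc' Hu' Hpx'), (legal_colour_incoming Hc Hu Hpx).
    now symmetry.
Qed.

Lemma corr_step p p' x : corr p p' -> adj p x -> exists x', adj p' x' /\ c p x = s (c' p' x').
Proof.
  intros Hpp' Hpx; pose proof (proj1 (proj2 Hs)) as Hsurj.
  destruct (Hsurj (c p x)) as [z Hz].
  assert (Hside : inVX p' <-> is_inl z).
  { rewrite <- (sym_fix_X_is_inl z Hs), Hz, <- (legal_colour_side Hc Hpx).
    pose proof (proj1 (corr_invariant Hpp')); tauto. }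
  destruct (legal_colour_surj Hc' Hside) as [x' [Hx' Hcx']].
  exists x'; split; [exact Hx' | now rewrite Hcx'].
Qed.

Lemma corr_functional x x1 : corr x x1 -> forall x2, corr x x2 -> x1 = x2.
Proof.
  induction 1 as [| p p' x x1 _ IH Hpx Hlev Hpx1 Hcol1];
    intros x2 H2; inversion H2 as [| q q' ? ? Hq Hqx Hlevq Hqx2 Hcol2]; subst.
  - reflexivity.
  - rewrite level_root in Hlevq; discriminate.
  - rewrite level_root in Hlev; discriminate.
  - assert (q = p) as -> by (apply (parent_unique Hqx Hpx); congruence).
    rewrite <- (IH _ Hq) in Hqx2, Hcol2.
    apply (legal_colour_inj Hc' Hpx1 Hqx2), (proj1 Hs); congruence.
Qed.

Lemma corr_total x : exists x', corr x x'.
Proof.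
  remember (level x) as n eqn:Hn; revert x Hn; induction n as [|n IH]; intros x Hn.
  - rewrite (level_eq0 (eq_sym Hn)); exists root'; constructor.
  - destruct (level_parent (eq_sym Hn)) as [p [Hpx Hp]].
    destruct (IH p (eq_sym Hp)) as [p' Hpp'].
    destruct (corr_step Hpp' Hpx) as [x' [Hx' Hcol]].
    exists x'; apply (corr_child Hpp' Hpx); [lia | exact Hx' | exact Hcol].
Qed.

Definition extension (x : V) : V :=
  proj1_sig (constructive_indefinite_description _ (corr_total x)).

Lemma corr_extension x : corr x (extension x).
Proof. unfold extension; now destruct constructive_indefinite_description. Qed.

Lemma extension_root : extension root = root'.
Proof. symmetry; exact (corr_functional corr_root (corr_extension root)). Qed.

Lemma extension_part x : inVX x <-> inVX (extension x).
Proof. exact (proj1 (corr_invariant (corr_extension x))). Qed.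

Lemma extension_adj a b : adj a b ->
  adj (extension a) (extension b) /\ c a b = s (c' (extension a) (extension b)).
Proof.
  intros Hab; destruct (level_adj Hab) as [Hlev | Hlev].
  - destruct (corr_step (corr_extension a) Hab) as [x' [Hx' Hcol]].
    assert (Hb : corr b x') by exact (corr_child (corr_extension a) Hab Hlev Hx' Hcol).
    rewrite <- (corr_functional Hb (corr_extension b)); now split.
  - destruct (corr_step (corr_extension b) (adj_sym Hab)) as [x' [Hx' Hcol]].
    assert (Ha : corr a x').
    { exact (corr_child (corr_extension b) (adj_sym Hab) Hlev Hx' Hcol). }
    rewrite <- (corr_functional Ha (corr_extension a)).
    split; [now apply adj_sym |].
    symmetry; exact (proj2 (corr_invariant (corr_extension b)) _ _ Hab (adj_sym Hx')).
Qed.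

End Extension.
End Levels.

Lemma colour_map_exists (X Y : Type) (c c' : V -> V -> X + Y)
    (s : X + Y -> X + Y) (v v' : V) :
  legal_colouring adj inVX c -> legal_colouring adj inVX c' -> sym_fix_X s ->
  (inVX v <-> inVX v') ->
  (forall u u', adj u v -> adj u' v' -> s (c' u' v') = c u v) ->
  exists g, g v = v' /\ (forall x, inVX x <-> inVX (g x)) /\
    forall a b, adj a b -> adj (g a) (g b) /\ c a b = s (c' (g a) (g b)).
Proof.
  intros Hc Hc' Hs Hpart Hcol.
  exists (extension Hc Hc' Hs Hpart Hcol); split; [|split].
  - apply extension_root.
  - apply extension_part.
  - apply extension_adj.
Qed.

Section Automorphisms.
Variables X Y : Type.
Variables c c' : V -> V -> X + Y.
Hypothesis Hc : legal_colouring adj inVX c.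
Hypothesis Hc' : legal_colouring adj inVX c'.

Lemma incoming_matching_exists v v' : (inVX v <-> inVX v') ->
  exists s, sym_fix_X s /\ forall u u', adj u v -> adj u' v' -> s (c' u' v') = c u v.
Proof.
  intros Hpart.
  destruct (classic (exists u0, adj u0 v)) as [[u0 Hu0] | Hnone];
    [destruct (classic (exists u0', adj u0' v')) as [[u0' Hu0'] | Hnone] |].
  - exists (swap (c' u0' v') (c u0 v)); split.
    + apply sym_fix_X_swap.
      rewrite <- (legal_colour_side Hc Hu0), <- (legal_colour_side Hc' Hu0').
      pose proof (bipartite Hu0); pose proof (bipartite Hu0').
      destruct (classic (inVX u0)), (classic (inVX u0')); tauto.
    + intros u u' Hu Hu'.
      rewrite (legal_colour_incoming Hc Hu Hu0), (legal_colour_incoming Hc' Hu' Hu0').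
      apply swap_l.
  - exists (fun z => z); split; [now apply sym_fix_X_intro; eauto |].
    intros u u' _ Hu'; exfalso; eauto.
  - exists (fun z => z); split; [now apply sym_fix_X_intro; eauto |].
    intros u u' Hu; exfalso; eauto.
Qed.

Lemma good_aut_unique s v v' g1 g2 : sym_fix_X s ->
  good_aut adj inVX c c' s v v' g1 -> good_aut adj inVX c c' s v v' g2 ->
  forall x, g1 x = g2 x.
Proof.
  intros [Hinj _] [[_ [_ A1]] [_ [E1 C1]]] [[_ [_ A2]] [_ [E2 C2]]].
  apply (eq_colour_maps c' v); [exact (legal_colour_inj Hc') | congruence | apply A1 | apply A2 |].
  intros a b Hab; apply Hinj; now rewrite <- C1, <- C2.
Qed.

Lemma good_aut_exists s v v' : sym_fix_X s -> (inVX v <-> inVX v') ->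
  (forall u u', adj u v -> adj u' v' -> s (c' u' v') = c u v) ->
  exists g, good_aut adj inVX c c' s v v' g.
Proof.
  intros Hs Hpart Hcol.
  destruct (sym_fix_X_inverse Hs) as [t [Ht [ts st]]].
  destruct (colour_map_exists Hc Hc' Hs Hpart Hcol) as [g [gv [Pg Ag]]].
  assert (Hcol' : forall u' u, adj u' v' -> adj u v -> t (c u v) = c' u' v')
    by (intros u' u Hu' Hu; now rewrite <- (Hcol u u'), ts).
  destruct (colour_map_exists Hc' Hc Ht (iff_sym Hpart) Hcol') as [h [hv [Ph Ah]]].
  assert (hg : forall x, h (g x) = x).
  { apply (eq_colour_maps c v); [exact (legal_colour_inj Hc) | congruence | | easy |].
    - intros a b Hab; apply Ah, Ag, Hab.
    - intros a b Hab; destruct (Ag a b Hab) as [Hg Cg]; rewrite Cg, (proj2 (Ah _ _ Hg)).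
      now rewrite st. }
  assert (gh : forall y, g (h y) = y).
  { apply (eq_colour_maps c' v'); [exact (legal_colour_inj Hc') | congruence | | easy |].
    - intros a b Hab; apply Ag, Ah, Hab.
    - intros a b Hab; destruct (Ah a b Hab) as [Hh Ch]; rewrite Ch, (proj2 (Ag _ _ Hh)).
      now rewrite ts. }
  exists g; split; [|split; [|split; [exact gv |]]].
  - apply (aut_of_inverse g h); [apply Ag | apply Ah | exact hg | exact gh].
  - split; [intros x; apply Pg |].
    intros y Hy; exists (h y); split; [exact (proj1 (Ph y) Hy) | apply gh].
  - intros a b Hab; apply Ag, Hab.
Qed.

End Automorphisms.
End Tree.

Theorem lemma3p3 (X Y V : Type) (adj : V -> V -> Prop) (inVX : V -> Prop)
    (c c' : V -> V -> X + Y) (v v' : V) :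
  (exists x1 x2 : X, x1 <> x2) ->
  (exists y1 y2 : Y, y1 <> y2) ->
  biregular_tree X Y adj inVX ->
  legal_colouring adj inVX c ->
  legal_colouring adj inVX c' ->
  even_distance adj v v' ->
  (exists s : X + Y -> X + Y, sym_fix_X s /\
     forall u u', adj u v -> adj u' v' -> s (c' u' v') = c u v) /\
  (forall s : X + Y -> X + Y, sym_fix_X s ->
     (forall u u', adj u v -> adj u' v' -> s (c' u' v') = c u v) ->
     exists g : V -> V, good_aut adj inVX c c' s v v' g /\
       forall g' : V -> V, good_aut adj inVX c c' s v v' g' ->
         forall x, g' x = g x).
Proof.
  intros _ _ [[Hsym [_ [Hconn Hacyc]]] [Hbip _]] Hc Hc' Hev.
  pose proof (even_distance_same_part inVX Hbip Hev) as Hpart.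
  split; [exact (incoming_matching_exists Hbip Hc Hc' _ _ Hpart) |].
  intros s Hs Hcol.
  destruct (good_aut_exists Hsym Hacyc Hconn Hbip Hc Hc' v v' Hs Hpart Hcol) as [g Hg].
  exists g; split; [exact Hg |].
  intros g' Hg'; exact (good_aut_unique Hconn Hc' Hs Hg' Hg).
Qed.
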